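(* Let $X=(X_1,X_2)$ be a nonnegative bivariate random vector with absolutely continuous distribution function $F$ supported in $(0,b_1)\times(0,b_2)$, $0<b_i<\infty$, with finite $\overline\varepsilon^*_i(X;t_1,t_2)$. Then there exist functions $c_1(\cdot),c_2(\cdot)$ with values in $(0,1)$ such that $$\overline\varepsilon^*_i(X;t_1,t_2)=c_i(t_j)\,m_i^X(t_1,t_2),\qquad i,j\in\{1,2\},\ i\ne j,$$ for all $(t_1,t_2)\in(0,b_1)\times(0,b_2)$ (so $c_i$ depends on $t_j$ only, not on $t_i$), if and only if $F$ is the bivariate power distribution $$F(t_1,t_2)=\left(\frac{t_1}{b_1}\right)^{c_1}\left(\frac{t_2}{b_2}\right)^{c_2+\theta\log(t_1/b_1)},\qquad 0<t_i<b_i,$$ for some $\theta\le0$ and constants $c_1,c_2>0$; in this case $c_i=\dfrac{c_i(b_j)}{1-c_i(b_j)}$.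
   Context: Let $F(x_1,x_2)=P(X_1\le x_1,X_2\le x_2)$. For $t_1,t_2>0$ with $F(t_1,t_2)>0$ define the conditional dynamic cumulative past entropies (CDCPE) $$\overline\varepsilon^*_1(X;t_1,t_2)=-\int_0^{t_1}\frac{F(x_1,t_2)}{F(t_1,t_2)}\log\frac{F(x_1,t_2)}{F(t_1,t_2)}dx_1,\qquad \overline\varepsilon^*_2(X;t_1,t_2)=-\int_0^{t_2}\frac{F(t_1,x_2)}{F(t_1,t_2)}\log\frac{F(t_1,x_2)}{F(t_1,t_2)}dx_2,$$ and the components of the bivariate expected inactivity time $m_1^X(t_1,t_2)=\frac{1}{F(t_1,t_2)}\int_0^{t_1}F(x_1,t_2)dx_1$, $m_2^X(t_1,t_2)=\frac{1}{F(t_1,t_2)}\int_0^{t_2}F(t_1,x_2)dx_2$. The values $c_i(b_j)$ are understood as the limits of $c_i(t_j)$ as $t_j\to b_j$. *)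

From Stdlib Require Import Reals Lra List ClassicalEpsilon.
Open Scope R_scope.

(* Total Riemann integral: the Riemann integral of f over [a,b] if f is
   Riemann integrable there, and 0 otherwise (value is independent of the
   chosen integrability proof, RiemannInt_P5). *)
Definition RInt (f : R -> R) (a b : R) : R :=
  match excluded_middle_informative (inhabited (Riemann_integrable f a b)) with
  | left H => RiemannInt (epsilon H (fun _ => True))
  | right _ => 0
  end.

(* F-volume of the rectangle (a1,c1] x (a2,c2]. *)
Definition rvol (F : R -> R -> R) (r : R * R * R * R) : R :=
  let '(a1, c1, a2, c2) := r in F c1 c2 - F a1 c2 - F c1 a2 + F a1 a2.

Definition rarea (r : R * R * R * R) : R :=
  let '(a1, c1, a2, c2) := r in (c1 - a1) * (c2 - a2).

Definition rect_ok (r : R * R * R * R) : Prop :=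
  let '(a1, c1, a2, c2) := r in a1 <= c1 /\ a2 <= c2.

Definition rect_disj (r r' : R * R * R * R) : Prop :=
  let '(a1, c1, a2, c2) := r in
  let '(a1', c1', a2', c2') := r' in
  c1 <= a1' \/ c1' <= a1 \/ c2 <= a2' \/ c2' <= a2.

Definition sumR (l : list R) : R := fold_right Rplus 0 l.

(* F is the joint distribution function P(X1<=x1, X2<=x2) of a random vector
   with values in [0,b1] x [0,b2] (nonnegative, supported in (0,b1)x(0,b2)). *)
Definition biv_cdf_on (F : R -> R -> R) (b1 b2 : R) : Prop :=
  (forall a1 c1 a2 c2, a1 <= c1 -> a2 <= c2 -> 0 <= rvol F (a1, c1, a2, c2)) /\
  (forall x1 x2, x1 <= 0 \/ x2 <= 0 -> F x1 x2 = 0) /\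
  (forall x1 x2, F x1 x2 = F (Rmin x1 b1) (Rmin x2 b2)) /\
  F b1 b2 = 1.

(* Absolute continuity of the distribution (w.r.t. Lebesgue measure on R^2),
   in the epsilon-delta form over finite families of non-overlapping
   rectangles (equivalent to mu_F << Lebesgue for a finite measure). *)
Definition biv_abs_cont (F : R -> R -> R) : Prop :=
  forall eps, 0 < eps -> exists delta, 0 < delta /\
    forall rs : list (R * R * R * R),
      Forall rect_ok rs -> ForallOrdPairs rect_disj rs ->
      sumR (map rarea rs) < delta ->
      sumR (map (rvol F) rs) < eps.

Definition cdcpe1 (F : R -> R -> R) (t1 t2 : R) : R :=
  - RInt (fun x1 => F x1 t2 / F t1 t2 * ln (F x1 t2 / F t1 t2)) 0 t1.

Definition cdcpe2 (F : R -> R -> R) (t1 t2 : R) : R :=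
  - RInt (fun x2 => F t1 x2 / F t1 t2 * ln (F t1 x2 / F t1 t2)) 0 t2.

Definition mit1 (F : R -> R -> R) (t1 t2 : R) : R :=
  RInt (fun x1 => F x1 t2) 0 t1 / F t1 t2.

Definition mit2 (F : R -> R -> R) (t1 t2 : R) : R :=
  RInt (fun x2 => F t1 x2) 0 t2 / F t1 t2.

Definition cdcpe_prop (F : R -> R -> R) (b1 b2 : R) (cf1 cf2 : R -> R) : Prop :=
  (forall t, 0 < t < b2 -> 0 < cf1 t < 1) /\
  (forall t, 0 < t < b1 -> 0 < cf2 t < 1) /\
  (forall t1 t2, 0 < t1 < b1 -> 0 < t2 < b2 ->
     cdcpe1 F t1 t2 = cf1 t2 * mit1 F t1 t2 /\
     cdcpe2 F t1 t2 = cf2 t1 * mit2 F t1 t2).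

Definition biv_power (F : R -> R -> R) (b1 b2 theta c1 c2 : R) : Prop :=
  theta <= 0 /\ 0 < c1 /\ 0 < c2 /\
  (forall t1 t2, 0 < t1 < b1 -> 0 < t2 < b2 ->
     F t1 t2 = Rpower (t1 / b1) c1 * Rpower (t2 / b2) (c2 + theta * ln (t1 / b1))).

(* Fix t2 and let G = F(., t2), H t = int_0^t G.  Proportionality of the CPE and the
   inactivity time with a constant factor c reads ln G = c + (int_0^t G ln G) / H, so ln G
   is differentiable, and differentiating gives G = e^d H^c: a separable ODE whose solution
   with H 0 = 0 is a power law, ln G = alpha + c/(1-c) ln t1.  Thus ln F is affine in
   ln t1 and in ln t2 separately, hence bilinear in (ln (t1/b1), ln (t2/b2)).  Absolute
   continuity makes the sections of F continuous, so the marginals F(., b2), F(b1, .) are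
   power laws too; F b1 b2 = 1 kills the constant term and F 0 b2 = F b1 0 = 0 forces
   c1, c2 > 0, while positivity of the slice exponent c1 + theta ln (t2/b2) for all t2
   forces theta <= 0.  Conversely, a power-law section of exponent a has CPE equal to
   a/(a+1) times the inactivity time, by direct integration. *)

From Pilot Require Import Defs.
From Stdlib Require Import Reals Lra ClassicalEpsilon.
From Coquelicot Require Import Coquelicot.
Open Scope R_scope.

Lemma Defs_RInt_eq (f : R -> R) (a b : R) :
  ex_RInt f a b -> Defs.RInt f a b = RInt f a b.
Proof.
  intros Hf. unfold Defs.RInt.
  destruct (excluded_middle_informative _) as [Hi | Hni].
  - rewrite (RInt_Reals f a b (epsilon Hi (fun _ => True))). reflexivity.
  - exfalso. apply Hni. constructor. now apply ex_RInt_Reals_0.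
Qed.

Lemma continuous_of_eps (f : R -> R) (x : R) :
  (forall eps, 0 < eps -> exists d, 0 < d /\
     forall z, Rabs (z - x) < d -> Rabs (f z - f x) < eps) ->
  continuous f x.
Proof.
  intros H. apply continuity_pt_filterlim. intros eps Heps.
  destruct (H eps Heps) as [d [Hd Hz]].
  exists d. split; [exact Hd|]. intros z [_ Hzx]. exact (Hz z Hzx).
Qed.

Lemma eps_of_continuous (f : R -> R) (x : R) : continuous f x ->
  forall eps, 0 < eps -> exists d, 0 < d /\
    forall z, Rabs (z - x) < d -> Rabs (f z - f x) < eps.
Proof.
  intros H eps Heps. apply continuity_pt_filterlim in H.
  destruct (H eps Heps) as [d [Hd Hz]].
  exists d. split; [exact Hd|]. intros z Hzx.
  destruct (Req_dec z x) as [-> | Hne].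
  - rewrite Rminus_diag, Rabs_R0. exact Heps.
  - apply Hz. repeat split; auto.
Qed.

Lemma ln_nonpos (x : R) : x <= 0 -> ln x = 0.
Proof. intros H. unfold ln. destruct (Rlt_dec 0 x); [exfalso; lra | reflexivity]. Qed.

Lemma xlnx_lower_bound (z : R) : 0 < z -> - (2 * sqrt z) < z * ln z.
Proof.
  intros Hz.
  assert (Hs : 0 < sqrt z) by (apply sqrt_lt_R0; exact Hz).
  assert (Hsz : sqrt z * sqrt z = z) by (apply sqrt_sqrt; lra).
  assert (Hln : ln z = - 2 * ln (/ sqrt z)).
  { rewrite ln_Rinv by exact Hs. rewrite <- Hsz at 1. rewrite ln_mult by exact Hs. ring. }
  assert (Hlt : ln (/ sqrt z) < / sqrt z).
  { pose proof (exp_ineq1_le (ln (/ sqrt z))) as He.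
    rewrite exp_ln in He by (apply Rinv_0_lt_compat; exact Hs). lra. }
  assert (Hk : z * / sqrt z = sqrt z) by (rewrite <- Hsz at 1; field; lra).
  rewrite Hln. nra.
Qed.

Lemma xlnx_continuous (y : R) : continuous (fun x => x * ln x) y.
Proof.
  destruct (Rlt_or_le 0 y) as [Hy | Hy].
  { apply (@ex_derive_continuous R_AbsRing R_NormedModule). auto_derive. lra. }
  apply continuous_of_eps. intros eps Heps.
  exists (Rmin 1 (eps * eps / 4)). split; [apply Rmin_pos; nra|].
  intros z Hz. apply Rabs_def2 in Hz.
  pose proof (Rmin_l 1 (eps * eps / 4)). pose proof (Rmin_r 1 (eps * eps / 4)).
  rewrite (ln_nonpos y) by exact Hy. rewrite Rmult_0_r, Rminus_0_r.
  destruct (Rlt_or_le 0 z) as [Hz0 | Hz0].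
  2: { rewrite (ln_nonpos z), Rmult_0_r, Rabs_R0 by exact Hz0. exact Heps. }
  assert (Hlnz : ln z < 0) by (rewrite <- ln_1; apply ln_increasing; lra).
  assert (Hsq : sqrt z < eps / 2).
  { apply Rsqr_incrst_0; unfold Rsqr; [rewrite sqrt_sqrt | apply sqrt_pos |]; lra. }
  pose proof (xlnx_lower_bound z Hz0).
  rewrite Rabs_left by nra. lra.
Qed.

Lemma locally_of_open_interval (P : R -> Prop) (a b x : R) :
  a < x < b -> (forall y, a < y < b -> P y) -> locally x P.
Proof.
  intros Hx HP. apply (locally_interval P x a b); simpl; try lra.
  intros y H1 H2. apply HP. simpl in *. lra.
Qed.

Lemma ex_RInt_of_continuous (f : R -> R) (a b : R) :
  (forall x, continuous f x) -> ex_RInt f a b.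
Proof. intros H. apply (@ex_RInt_continuous R_CompleteNormedModule). intros x _. apply H. Qed.

Lemma RInt_0_is_derive (g : R -> R) (x : R) :
  (forall y, continuous g y) -> is_derive (fun t => RInt g 0 t) x (g x).
Proof.
  intros Hg. apply (is_derive_RInt g (fun t => RInt g 0 t) 0 x); [|apply Hg].
  apply filter_forall. intros t. apply (RInt_correct g 0 t), ex_RInt_of_continuous, Hg.
Qed.

Lemma RInt_0_continuous (g : R -> R) (x : R) :
  (forall y, continuous g y) -> continuous (fun t => RInt g 0 t) x.
Proof.
  intros Hg. apply (@ex_derive_continuous R_AbsRing R_NormedModule).
  eexists. apply RInt_0_is_derive, Hg.
Qed.

Lemma diff_of_const_derive (f : R -> R) (a b k : R) :
  (forall x, Rmin a b < x < Rmax a b -> is_derive f x k) ->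
  (forall x, Rmin a b <= x <= Rmax a b -> continuous f x) ->
  f b - f a = k * (b - a).
Proof.
  intros Hd Hc.
  destruct (MVT_gen f a b (fun _ => k) Hd) as [c [_ Hfc]]; [|exact Hfc].
  intros x Hx. apply continuity_pt_filterlim, Hc, Hx.
Qed.

Lemma diff_of_const_derive_open (f : R -> R) (a b k x y : R) :
  (forall z, a < z < b -> is_derive f z k) -> a < x < b -> a < y < b ->
  f y - f x = k * (y - x).
Proof.
  intros Hd Hx Hy.
  assert (Hin : forall z, Rmin x y <= z <= Rmax x y -> a < z < b).
  { intros z Hz. pose proof (Rmin_glb_lt x y a). pose proof (Rmax_lub_lt x y b). lra. }
  apply diff_of_const_derive.
  - intros z Hz. apply Hd, Hin. lra.
  - intros z Hz. apply (@ex_derive_continuous R_AbsRing R_NormedModule).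
    eexists. apply Hd, Hin, Hz.
Qed.

Lemma RInt_0_antiderivative (g P : R -> R) (t : R) :
  (forall x, continuous g x) -> 0 < t ->
  (forall x, 0 <= x <= t -> continuous P x) ->
  (forall x, 0 < x < t -> is_derive P x (g x)) ->
  RInt g 0 t = P t - P 0.
Proof.
  intros Hg Ht Hc Hd.
  assert (Hdiff := diff_of_const_derive (fun x => RInt g 0 x - P x) 0 t 0).
  rewrite Rmin_left, Rmax_right, RInt_point in Hdiff by lra.
  enough (RInt g 0 t - P t - (zero - P 0) = 0 * (t - 0)) by (unfold zero in *; simpl in *; lra).
  apply Hdiff.
  - intros x Hx.
    pose proof (is_derive_minus (fun x => RInt g 0 x) P x _ _
                  (RInt_0_is_derive g x Hg) (Hd x Hx)) as Hm.
    simpl in Hm. unfold minus, plus, opp in Hm; simpl in Hm.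
    rewrite Rplus_opp_r in Hm. exact Hm.
  - intros x Hx. apply (continuous_minus (fun x => RInt g 0 x) P); [apply RInt_0_continuous, Hg | apply Hc, Hx].
Qed.

Definition dcpe (G : R -> R) (t : R) : R :=
  - Defs.RInt (fun x => G x / G t * ln (G x / G t)) 0 t.

Definition mit (G : R -> R) (t : R) : R := Defs.RInt G 0 t / G t.

Section OneVariable.

Variables (G : R -> R) (B : R).
Hypothesis G_continuous : forall x, continuous G x.

Lemma normalized_xlnx_continuous (t x : R) :
  continuous (fun x => G x / G t * ln (G x / G t)) x.
Proof.
  apply (continuous_comp (fun x => G x / G t) (fun y => y * ln y)); [|apply xlnx_continuous].
  apply (continuous_mult G (fun _ => / G t)); [apply G_continuous | apply continuous_const].
Qed.

Section PowerLaw.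

Variables (alpha a : R).
Hypothesis G0 : G 0 = 0.
Hypothesis a_pos : 0 < a.
Hypothesis G_power : forall x, 0 < x < B -> G x = exp (alpha + a * ln x).

Lemma power_ratio (t x : R) : 0 < t < B -> 0 < x < B ->
  G x / G t = exp (a * (ln x - ln t)).
Proof.
  intros Ht Hx. rewrite !G_power by assumption.
  replace (alpha + a * ln x) with (alpha + a * ln t + a * (ln x - ln t)) by ring.
  rewrite exp_plus. field. apply Rgt_not_eq, exp_pos.
Qed.

Lemma power_RInt (t : R) : 0 < t < B -> RInt G 0 t = t * G t / (a + 1).
Proof.
  intros Ht.
  rewrite (RInt_0_antiderivative G (fun x => x * G x / (a + 1))); [| apply G_continuous | lra | |].
  - rewrite G0. simpl. field. lra.
  - intros x _. apply (continuous_mult (fun x => x * G x) (fun _ => / (a + 1))); [|apply continuous_const].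
    apply (continuous_mult (fun x => x) G); [apply continuous_id | apply G_continuous].
  - intros x Hx.
    apply (is_derive_ext_loc (fun y => y * exp (alpha + a * ln y) / (a + 1))).
    { apply (locally_of_open_interval _ 0 B); [lra|]. intros y Hy. rewrite G_power by exact Hy. reflexivity. }
    auto_derive; [lra|]. rewrite (G_power x) by lra. field. lra.
Qed.

(* With [u = G x / G t = (x/t)^a], an antiderivative of [u ln u] is [x/(a+1) u ln u - a x u/(a+1)^2]. *)
Lemma power_normalized_xlnx_RInt (t : R) : 0 < t < B ->
  RInt (fun x => G x / G t * ln (G x / G t)) 0 t = - (a * t) / ((a + 1) * (a + 1)).
Proof.
  intros Ht.
  assert (Gt : 0 < G t) by (rewrite G_power by exact Ht; apply exp_pos).
  set (u := fun x => G x / G t).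
  rewrite (RInt_0_antiderivative _
             (fun x => x / (a + 1) * (u x * ln (u x)) - a * x * u x / ((a + 1) * (a + 1))));
    [| apply normalized_xlnx_continuous | lra | |].
  - unfold u. rewrite G0. unfold Rdiv at 2 3. rewrite Rinv_r, ln_1 by lra. simpl. field. lra.
  - intros x _. unfold u.
    apply (continuous_minus (fun x => x / (a + 1) * (G x / G t * ln (G x / G t)))
                            (fun x => a * x * (G x / G t) / ((a + 1) * (a + 1)))).
    + apply (continuous_mult (fun x => x / (a + 1))); [|apply normalized_xlnx_continuous].
      apply (continuous_mult (fun x => x) (fun _ => / (a + 1))); [apply continuous_id | apply continuous_const].
    + apply (continuous_mult (fun x => a * x * (G x / G t)) (fun _ => / ((a + 1) * (a + 1)))); [|apply continuous_const].
      apply (continuous_mult (fun x => a * x)); [apply (continuous_mult (fun _ => a) (fun x => x)); [apply continuous_const | apply continuous_id]|].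
      apply (continuous_mult G (fun _ => / G t)); [apply G_continuous | apply continuous_const].
  - intros x Hx.
    apply (is_derive_ext_loc (fun y => y / (a + 1) * (exp (a * (ln y - ln t)) * (a * (ln y - ln t)))
                                     - a * y * exp (a * (ln y - ln t)) / ((a + 1) * (a + 1)))).
    { apply (locally_of_open_interval _ 0 B); [lra|]. intros y Hy.
      unfold u. rewrite power_ratio, ln_exp by lra. reflexivity. }
    auto_derive; [lra|]. unfold u. rewrite power_ratio, ln_exp by lra. unfold Rminus. field. lra.
Qed.

Lemma power_dcpe (t : R) : 0 < t < B -> 0 < mit G t /\ dcpe G t = a / (a + 1) * mit G t.
Proof.
  intros Ht.
  assert (Gt : 0 < G t) by (rewrite G_power by exact Ht; apply exp_pos).
  unfold dcpe, mit.
  rewrite !Defs_RInt_eq by (apply ex_RInt_of_continuous; first [apply normalized_xlnx_continuous | apply G_continuous]).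
  rewrite power_normalized_xlnx_RInt, power_RInt by exact Ht.
  split.
  - replace (t * G t / (a + 1) / G t) with (t / (a + 1)) by (field; lra).
    apply Rdiv_lt_0_compat; lra.
  - field. lra.
Qed.

End PowerLaw.

Lemma xlnx_comp_continuous (x : R) : continuous (fun x => G x * ln (G x)) x.
Proof. apply (continuous_comp G (fun y => y * ln y)); [apply G_continuous | apply xlnx_continuous]. Qed.

Lemma dcpe_mul (t : R) : 0 < t -> (forall x, 0 < x <= t -> 0 < G x) ->
  dcpe G t * G t = ln (G t) * RInt G 0 t - RInt (fun x => G x * ln (G x)) 0 t.
Proof.
  intros Ht HGpos.
  assert (Gt : 0 < G t) by (apply HGpos; lra).
  assert (Hi : is_RInt (fun x => G x / G t * ln (G x / G t)) 0 t
                 (/ G t * RInt (fun x => G x * ln (G x)) 0 t - ln (G t) / G t * RInt G 0 t)).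
  { apply (is_RInt_ext (fun x => minus (scal (/ G t) (G x * ln (G x))) (scal (ln (G t) / G t) (G x)))).
    - rewrite Rmin_left, Rmax_right by lra. intros x Hx.
      assert (0 < G x) by (apply HGpos; lra).
      rewrite ln_div by lra. unfold minus, plus, opp, scal; simpl; unfold mult; simpl. field. lra.
    - apply (is_RInt_minus (V := R_NormedModule)); apply (is_RInt_scal (V := R_NormedModule));
        apply (RInt_correct (V := R_CompleteNormedModule)), ex_RInt_of_continuous;
        first [apply xlnx_comp_continuous | apply G_continuous]. }
  unfold dcpe. rewrite Defs_RInt_eq by (apply ex_RInt_of_continuous, normalized_xlnx_continuous).
  rewrite (is_RInt_unique (V := R_CompleteNormedModule) _ _ _ _ Hi). field. lra.
Qed.

Lemma zero_of_derive_0 (f : R -> R) (t : R) :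
  (forall z, 0 < z < B -> is_derive f z 0) ->
  (forall eta, 0 < eta -> exists s, 0 < s < B /\ Rabs (f s) < eta) ->
  0 < t < B -> f t = 0.
Proof.
  intros Hd Hsmall Ht.
  destruct (Req_dec (f t) 0) as [| Hne]; [assumption|]. exfalso.
  destruct (Hsmall (Rabs (f t))) as [s [Hs Hfs]]; [apply Rabs_pos_lt, Hne|].
  pose proof (diff_of_const_derive_open f 0 B 0 s t Hd Hs Ht) as Hst.
  replace (f t) with (f s) in Hfs by lra. lra.
Qed.

Lemma exp_mul_ln_small (p eta : R) : 0 < p -> 0 < eta ->
  exists ep, 0 < ep /\ forall h, 0 < h < ep -> exp (p * ln h) < eta.
Proof.
  intros Hp Heta. exists (exp (ln eta / p)). split; [apply exp_pos|].
  intros h Hh.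
  assert (Hlt : ln h < ln eta / p) by (rewrite <- (ln_exp (ln eta / p)); apply ln_increasing; lra).
  rewrite <- (exp_ln eta) by exact Heta. apply exp_increasing.
  apply (Rmult_lt_compat_l p) in Hlt; [| exact Hp].
  replace (p * (ln eta / p)) with (ln eta) in Hlt by (field; lra). exact Hlt.
Qed.

Section ProportionalCPE.

Variable c : R.
Hypothesis c_range : 0 < c < 1.
Hypothesis B_pos : 0 < B.
Hypothesis G_pos : forall x, 0 < x < B -> 0 < G x.
Hypothesis dcpe_prop : forall t, 0 < t < B -> dcpe G t = c * mit G t.

Let H t := RInt G 0 t.
Let K t := RInt (fun x => G x * ln (G x)) 0 t.

Lemma RInt_G_is_derive (t : R) : is_derive H t (G t).
Proof. apply RInt_0_is_derive, G_continuous. Qed.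

Lemma RInt_GlnG_is_derive (t : R) : is_derive K t (G t * ln (G t)).
Proof. apply (RInt_0_is_derive (fun x => G x * ln (G x))), xlnx_comp_continuous. Qed.

Lemma RInt_G_pos (t : R) : 0 < t < B -> 0 < H t.
Proof.
  intros Ht. apply RInt_gt_0; [lra | |].
  - intros x Hx. apply G_pos. lra.
  - intros x _. apply G_continuous.
Qed.

(* This shows that [ln G] is differentiable, which is not assumed. *)
Lemma ln_G_eq_RInt_ratio (t : R) : 0 < t < B -> ln (G t) = c + K t / H t.
Proof.
  intros Ht.
  assert (Gt : 0 < G t) by (apply G_pos, Ht).
  pose proof (RInt_G_pos t Ht) as Ht'.
  pose proof (dcpe_mul t ltac:(lra) ltac:(intros x Hx; apply G_pos; lra)) as Hmul.
  rewrite dcpe_prop in Hmul by exact Ht. unfold mit in Hmul.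
  rewrite Defs_RInt_eq in Hmul by (apply ex_RInt_of_continuous, G_continuous).
  fold (H t) (K t) in Hmul.
  replace (c * (H t / G t) * G t) with (c * H t) in Hmul by (field; lra).
  apply (Rmult_eq_reg_r (H t)); [| lra].
  replace ((c + K t / H t) * H t) with (c * H t + K t) by (field; lra). lra.
Qed.

Lemma ln_G_eq_ln_RInt_G : exists d, forall t, 0 < t < B -> ln (G t) = d + c * ln (H t).
Proof.
  set (psi := fun t => K t / H t - c * ln (H t)).
  assert (Hpsi : forall t, 0 < t < B -> is_derive psi t 0).
  { intros t Ht. pose proof (RInt_G_pos t Ht).
    unfold psi. auto_derive.
    - repeat split; try (eexists; eauto using RInt_G_is_derive, RInt_GlnG_is_derive); lra.
    - replace (Derive (fun x => H x) t) with (G t) by (symmetry; apply is_derive_unique, RInt_G_is_derive).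
      replace (Derive (fun x => K x) t) with (G t * ln (G t))
        by (symmetry; apply is_derive_unique, RInt_GlnG_is_derive).
      rewrite ln_G_eq_RInt_ratio by exact Ht. field. lra. }
  exists (c + psi (B / 2)). intros t Ht.
  pose proof (diff_of_const_derive_open psi 0 B 0 (B / 2) t Hpsi ltac:(lra) Ht).
  rewrite ln_G_eq_RInt_ratio by exact Ht. unfold psi in *. lra.
Qed.

(* [G = exp d * H ^ c] is the separable ODE [H' = exp d * H ^ c], and [H 0 = 0] fixes
   the integration constant of [H ^ (1 - c)]. *)
Lemma RInt_G_power_linear :
  exists kappa, 0 < kappa /\ forall t, 0 < t < B -> exp ((1 - c) * ln (H t)) = kappa * t.
Proof.
  destruct ln_G_eq_ln_RInt_G as [d Hd].
  set (kappa := (1 - c) * exp d).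
  assert (Hkappa : 0 < kappa) by (apply Rmult_lt_0_compat; [lra | apply exp_pos]).
  exists kappa. split; [exact Hkappa|]. intros t Ht.
  enough (exp ((1 - c) * ln (H t)) - kappa * t = 0) by lra.
  apply (zero_of_derive_0 (fun t => exp ((1 - c) * ln (H t)) - kappa * t)); [| | exact Ht].
  - intros z Hz. pose proof (RInt_G_pos z Hz) as Hz'.
    auto_derive; [repeat split; try (eexists; apply RInt_G_is_derive); lra|].
    replace (Derive (fun x => H x) z) with (G z) by (symmetry; apply is_derive_unique, RInt_G_is_derive).
    assert (HGz : G z = exp d * exp (c * ln (H z))).
    { rewrite <- exp_plus, <- Hd by exact Hz. symmetry. apply exp_ln, G_pos, Hz. }
    assert (Hexp : exp ((1 - c) * ln (H z)) * exp (c * ln (H z)) = H z)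
      by (rewrite <- exp_plus; replace ((1 - c) * ln (H z) + c * ln (H z)) with (ln (H z)) by ring;
          apply exp_ln, Hz').
    rewrite HGz. unfold kappa.
    transitivity ((1 - c) * exp d * (exp ((1 - c) * ln (H z)) * exp (c * ln (H z))) / H z - (1 - c) * exp d);
      [field; lra|].
    rewrite Hexp. field. lra.
  - intros eta Heta.
    destruct (exp_mul_ln_small (1 - c) (eta / 2)) as [ep [Hep Hsmall]]; [lra | lra |].
    destruct (eps_of_continuous H 0 (RInt_0_continuous G 0 G_continuous) ep Hep) as [del [Hdel Hnear]].
    set (s := Rmin (Rmin (B / 2) (del / 2)) (eta / (2 * (kappa + 1)))).
    assert (Hs1 : s <= B / 2 /\ s <= del / 2).
    { split; (eapply Rle_trans; [apply Rmin_l|]); [apply Rmin_l | apply Rmin_r]. }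
    assert (Hs2 : s <= eta / (2 * (kappa + 1))) by apply Rmin_r.
    assert (Hs0 : 0 < s) by (repeat apply Rmin_pos; try apply Rdiv_lt_0_compat; lra).
    assert (Hks : kappa * s < eta / 2).
    { apply Rle_lt_trans with (kappa * (eta / (2 * (kappa + 1)))); [apply Rmult_le_compat_l; lra|].
      apply (Rmult_lt_reg_r (2 * (kappa + 1))); [lra|].
      replace (kappa * (eta / (2 * (kappa + 1))) * (2 * (kappa + 1))) with (kappa * eta) by (field; lra).
      nra. }
    assert (HHs : 0 < H s < ep).
    { split; [apply RInt_G_pos; lra|].
      specialize (Hnear s ltac:(rewrite Rminus_0_r, Rabs_pos_eq; lra)).
      assert (HH0 : H 0 = 0) by (unfold H; rewrite RInt_point; reflexivity).
      rewrite HH0, Rminus_0_r, Rabs_pos_eq in Hnear; [exact Hnear | apply Rlt_le, RInt_G_pos; lra]. }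
    exists s. split; [lra|].
    pose proof (Hsmall (H s) HHs). pose proof (exp_pos ((1 - c) * ln (H s))).
    apply Rabs_def1; nra.
Qed.

Lemma ln_G_affine_ln : exists alpha, forall t, 0 < t < B -> ln (G t) = alpha + c / (1 - c) * ln t.
Proof.
  destruct ln_G_eq_ln_RInt_G as [d Hd]. destruct RInt_G_power_linear as [kappa [Hkappa Hlin]].
  exists (d + c / (1 - c) * ln kappa). intros t Ht.
  assert (Hl : (1 - c) * ln (H t) = ln kappa + ln t)
    by (rewrite <- ln_mult, <- Hlin, ln_exp by lra; reflexivity).
  rewrite Hd by exact Ht.
  replace (ln (H t)) with ((ln kappa + ln t) / (1 - c)) by (rewrite <- Hl; field; lra).
  field. lra.
Qed.

End ProportionalCPE.
End OneVariable.

Lemma continuous_of_small_increments (g : R -> R) (x : R) :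
  (forall eps, 0 < eps -> exists d, 0 < d /\
     forall u v, u <= v -> v - u < d -> 0 <= g v - g u < eps) ->
  continuous g x.
Proof.
  intros Hinc. apply continuous_of_eps. intros eps Heps.
  destruct (Hinc eps Heps) as [d [Hd Hgd]]. exists d. split; [exact Hd|].
  intros z Hz. apply Rabs_def2 in Hz.
  destruct (Rle_or_lt z x) as [Hzx | Hxz].
  - pose proof (Hgd z x Hzx ltac:(lra)). rewrite Rabs_left1; lra.
  - pose proof (Hgd x z ltac:(lra) ltac:(lra)). rewrite Rabs_pos_eq; lra.
Qed.

Lemma exp_affine_limit (g : R -> R) (a k : R) :
  continuous g 0 -> (forall v, v < 0 -> g v = exp (a + k * v)) -> g 0 = exp a.
Proof.
  intros Hg Hexp.
  assert (He : continuous (fun v => exp (a + k * v)) 0).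
  { apply (@ex_derive_continuous R_AbsRing R_NormedModule). auto_derive. exact I. }
  destruct (Req_dec (g 0) (exp a)) as [| Hne]; [assumption|]. exfalso.
  set (eps := Rabs (g 0 - exp a) / 2).
  assert (Heps : 0 < eps) by (apply Rdiv_lt_0_compat; [apply Rabs_pos_lt; lra | lra]).
  destruct (eps_of_continuous g 0 Hg eps Heps) as [d1 [Hd1 Hg1]].
  destruct (eps_of_continuous _ 0 He eps Heps) as [d2 [Hd2 He2]].
  set (v := - Rmin d1 d2 / 2).
  assert (Hv : 0 < Rmin d1 d2) by (apply Rmin_pos; assumption).
  assert (Hv1 : Rabs (v - 0) < d1 /\ Rabs (v - 0) < d2).
  { unfold v. rewrite Rminus_0_r, Rabs_left by lra.
    pose proof (Rmin_l d1 d2). pose proof (Rmin_r d1 d2). lra. }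
  specialize (Hg1 v (proj1 Hv1)). specialize (He2 v (proj2 Hv1)).
  rewrite Rmult_0_r, Rplus_0_r, <- Hexp in He2 by (unfold v; lra).
  pose proof (Rabs_triang (g 0 - g v) (g v - exp a)) as Htri.
  replace (g 0 - g v + (g v - exp a)) with (g 0 - exp a) in Htri by ring.
  rewrite Rabs_minus_sym in Hg1. unfold eps in *. lra.
Qed.

Lemma slope_nonpos (c th : R) : (forall v, v < 0 -> 0 < c + th * v) -> th <= 0.
Proof.
  intros Hpos. destruct (Rle_or_lt th 0) as [| Hth]; [assumption|]. exfalso.
  pose proof (Rle_abs c).
  specialize (Hpos (- (Rabs c + 1) / th) ltac:(apply Rdiv_neg_pos; [pose proof (Rabs_pos c) |]; lra)).
  replace (c + th * (- (Rabs c + 1) / th)) with (c - Rabs c - 1) in Hpos by (field; lra). lra.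
Qed.

(* Comparing the two affine representations at [u = -1, -2] and [v = -1, -2] forces the
   coefficient of [u] to be affine in [v], with slope [a2 (-1) - a2 (-2)]. *)
Lemma separately_affine_bilinear (Phi : R -> R -> R) (a1 a2 : R -> R) :
  (forall v, v < 0 -> exists al, forall u, u < 0 -> Phi u v = al + a1 v * u) ->
  (forall u, u < 0 -> exists be, forall v, v < 0 -> Phi u v = be + a2 u * v) ->
  exists r c1 c2 th, forall u v, u < 0 -> v < 0 ->
    Phi u v = r + c1 * u + c2 * v + th * u * v /\ a1 v = c1 + th * v /\ a2 u = c2 + th * u.
Proof.
  intros Haff1 Haff2.
  assert (Hu : forall u v, u < 0 -> v < 0 -> Phi u v = Phi (-1) v + a1 v * (u + 1)).
  { intros u v Hu0 Hv0. destruct (Haff1 v Hv0) as [al Hal].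
    rewrite (Hal u Hu0), (Hal (-1)) by lra. ring. }
  assert (Hv : forall u v, u < 0 -> v < 0 -> Phi u v = Phi u (-1) + a2 u * (v + 1)).
  { intros u v Hu0 Hv0. destruct (Haff2 u Hu0) as [be Hbe].
    rewrite (Hbe v Hv0), (Hbe (-1)) by lra. ring. }
  set (th := a2 (-1) - a2 (-2)).
  assert (Ha1 : forall v, v < 0 -> a1 v = a1 (-1) + th * (v + 1)).
  { intros v Hv0.
    pose proof (Hu (-2) v ltac:(lra) Hv0). pose proof (Hu (-2) (-1) ltac:(lra) ltac:(lra)).
    pose proof (Hv (-2) v ltac:(lra) Hv0). pose proof (Hv (-1) v ltac:(lra) Hv0).
    unfold th. lra. }
  set (c1 := a1 (-1) + th). set (c2 := a2 (-1) + th).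
  set (r := Phi (-1) (-1) + a1 (-1) + a2 (-1) + th).
  assert (HPhi : forall u v, u < 0 -> v < 0 -> Phi u v = r + c1 * u + c2 * v + th * u * v).
  { intros u v Hu0 Hv0. rewrite (Hu u v Hu0 Hv0), (Hv (-1) v ltac:(lra) Hv0), (Ha1 v Hv0).
    unfold r, c1, c2. ring. }
  exists r, c1, c2, th. intros u v Hu0 Hv0. split; [|split].
  - apply HPhi; assumption.
  - rewrite (Ha1 v Hv0). unfold c1. ring.
  - pose proof (Hv u (-2) Hu0 ltac:(lra)) as Hu2.
    rewrite (HPhi u (-2)), (HPhi u (-1)) in Hu2 by lra. lra.
Qed.

Lemma bexp_range (b u : R) : 0 < b -> u < 0 -> 0 < b * exp u < b.
Proof.
  intros Hb Hu. pose proof (exp_pos u).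
  assert (exp u < 1) by (rewrite <- exp_0; apply exp_increasing, Hu). nra.
Qed.

Lemma ln_bexp (b u : R) : 0 < b -> ln (b * exp u) = ln b + u.
Proof. intros Hb. rewrite ln_mult, ln_exp by (apply exp_pos || exact Hb). reflexivity. Qed.

Lemma bexp_ln_ratio (b t : R) : 0 < t < b -> b * exp (ln (t / b)) = t /\ ln (t / b) < 0.
Proof.
  intros Ht. rewrite exp_ln by (apply Rdiv_lt_0_compat; lra). split; [field; lra|].
  rewrite <- ln_1. apply ln_increasing; [apply Rdiv_lt_0_compat; lra|].
  apply (Rmult_lt_reg_r b); [lra|]. replace (t / b * b) with t by (field; lra). lra.
Qed.

Lemma exponent_pos_of_vanishing (g : R -> R) (b k : R) : 0 < b ->
  continuous g 0 -> g 0 = 0 -> (forall u, u < 0 -> g (b * exp u) = exp (k * u)) -> 0 < k.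
Proof.
  intros Hb Hg Hg0 Hexp.
  destruct (Rlt_or_le 0 k) as [| Hk]; [assumption|]. exfalso.
  destruct (eps_of_continuous g 0 Hg 1 ltac:(lra)) as [d [Hd Hnear]].
  set (t := Rmin b d / 2).
  assert (Hmin : 0 < Rmin b d) by (apply Rmin_pos; assumption).
  assert (Ht : 0 < t < b) by (pose proof (Rmin_l b d); unfold t; lra).
  destruct (bexp_ln_ratio b t Ht) as [Hbt Hu].
  specialize (Hnear t ltac:(rewrite Rminus_0_r, Rabs_pos_eq; pose proof (Rmin_r b d); unfold t; lra)).
  rewrite Hg0, Rminus_0_r, <- Hbt, Hexp in Hnear by exact Hu.
  pose proof (exp_ineq1_le (k * ln (t / b))).
  rewrite Rabs_pos_eq in Hnear by (pose proof (exp_pos (k * ln (t / b))); lra). nra.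
Qed.

Lemma power_form_exp (b1 b2 th c1 c2 t1 t2 : R) :
  Rpower (t1 / b1) c1 * Rpower (t2 / b2) (c2 + th * ln (t1 / b1)) =
  exp (c1 * ln (t1 / b1) + c2 * ln (t2 / b2) + th * ln (t1 / b1) * ln (t2 / b2)).
Proof. unfold Rpower. rewrite <- exp_plus. f_equal. ring. Qed.

Definition cpe_factor (a : R) : R := a / (a + 1).

Lemma cpe_factor_range (a : R) : 0 < a -> 0 < cpe_factor a < 1.
Proof.
  intros Ha. unfold cpe_factor. split; [apply Rdiv_lt_0_compat; lra|].
  apply (Rmult_lt_reg_r (a + 1)); [lra|]. replace (a / (a + 1) * (a + 1)) with a by (field; lra). lra.
Qed.

Lemma cpe_factor_inv (a : R) : 0 < a ->
  cpe_factor a <> 1 /\ a = cpe_factor a / (1 - cpe_factor a).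
Proof.
  intros Ha. unfold cpe_factor. split.
  - intros Heq. apply (Rmult_eq_compat_r (a + 1)) in Heq.
    replace (a / (a + 1) * (a + 1)) with a in Heq by (field; lra). lra.
  - field. lra.
Qed.

Lemma limit1_in_of_continuous (f q : R -> R) (D : R -> Prop) (x0 : R) :
  continuous q x0 -> (forall t, D t -> f t = q t) -> limit1_in f D (q x0) x0.
Proof.
  intros Hq Hfq eps Heps.
  destruct (eps_of_continuous q x0 Hq eps Heps) as [d [Hd Hnear]].
  exists d. split; [exact Hd|]. intros x [Hx Hxd]. simpl in *. unfold R_dist in *.
  rewrite Hfq by exact Hx. apply Hnear, Hxd.
Qed.

Section Bivariate.

Variables (F : R -> R -> R) (b1 b2 : R).
Hypothesis b1_pos : 0 < b1.
Hypothesis b2_pos : 0 < b2.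
Hypothesis F_cdf : biv_cdf_on F b1 b2.
Hypothesis F_abs_cont : biv_abs_cont F.

Lemma cdf_zero (x y : R) : x <= 0 \/ y <= 0 -> F x y = 0.
Proof. apply F_cdf. Qed.

Lemma rvol_nonneg (r : R * R * R * R) : rect_ok r -> 0 <= rvol F r.
Proof. destruct r as [[[a1 c1] a2] c2]. intros [H1 H2]. apply F_cdf; assumption. Qed.

Lemma rvol_small : forall eps, 0 < eps -> exists d, 0 < d /\
  forall r, rect_ok r -> rarea r < d -> rvol F r < eps.
Proof.
  intros eps Heps. destruct (F_abs_cont eps Heps) as [d [Hd Hsum]]. exists d. split; [exact Hd|].
  intros r Hr Harea. specialize (Hsum (cons r nil)). simpl in Hsum. rewrite !Rplus_0_r in Hsum.
  apply Hsum; [repeat constructor; exact Hr | repeat constructor | exact Harea].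
Qed.

(* Section increments are [F]-volumes of thin strips, which absolute continuity makes small. *)
Lemma section_increments (g : R -> R) (w : R) (strip : R -> R -> R * R * R * R) : 0 <= w ->
  (forall u v, u <= v -> rect_ok (strip u v) /\ rarea (strip u v) = (v - u) * w /\
                         g v - g u = rvol F (strip u v)) ->
  forall eps, 0 < eps -> exists d, 0 < d /\
    forall u v, u <= v -> v - u < d -> 0 <= g v - g u < eps.
Proof.
  intros Hw Hstrip eps Heps.
  destruct (rvol_small eps Heps) as [d [Hd Hvol]].
  exists (d / (w + 1)). split; [apply Rdiv_lt_0_compat; lra|].
  intros u v Huv Hvu. destruct (Hstrip u v Huv) as [Hok [Harea ->]].
  split; [apply rvol_nonneg, Hok|]. apply Hvol; [exact Hok|]. rewrite Harea.
  apply Rle_lt_trans with ((v - u) * (w + 1)); [apply Rmult_le_compat_l; lra|].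
  apply (Rmult_lt_compat_r (w + 1)) in Hvu; [| lra].
  replace (d / (w + 1) * (w + 1)) with d in Hvu by (field; lra). exact Hvu.
Qed.

Lemma cdf_continuous_l (y x : R) : 0 <= y -> continuous (fun x => F x y) x.
Proof.
  intros Hy. apply continuous_of_small_increments.
  apply (section_increments _ y (fun u v => (u, v, 0, y)) Hy).
  intros u v Huv. simpl. repeat split; try lra.
  rewrite (cdf_zero u 0), (cdf_zero v 0) by lra. ring.
Qed.

Lemma cdf_continuous_r (x y : R) : 0 <= x -> continuous (fun y => F x y) y.
Proof.
  intros Hx. apply continuous_of_small_increments.
  apply (section_increments _ x (fun u v => (0, x, u, v)) Hx).
  intros u v Huv. simpl. repeat split; try lra.
  rewrite (cdf_zero 0 u), (cdf_zero 0 v) by lra. ring.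
Qed.

Lemma cdf_continuous_bexp_r (u v : R) : continuous (fun v => F (b1 * exp u) (b2 * exp v)) v.
Proof.
  apply (continuous_comp (fun v => b2 * exp v) (fun y => F (b1 * exp u) y)).
  - apply (@ex_derive_continuous R_AbsRing R_NormedModule). auto_derive. exact I.
  - apply cdf_continuous_r. pose proof (exp_pos u). nra.
Qed.

Lemma cdf_continuous_bexp_l (u v : R) : continuous (fun u => F (b1 * exp u) (b2 * exp v)) u.
Proof.
  apply (continuous_comp (fun u => b1 * exp u) (fun x => F x (b2 * exp v))).
  - apply (@ex_derive_continuous R_AbsRing R_NormedModule). auto_derive. exact I.
  - apply cdf_continuous_l. pose proof (exp_pos v). nra.
Qed.

Section LogBilinear.

Variables (r c1 c2 th : R).
Hypothesis F_log_bilinear : forall u v, u < 0 -> v < 0 ->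
  F (b1 * exp u) (b2 * exp v) = exp (r + c1 * u + c2 * v + th * u * v).

Lemma marginal_l_exp (u : R) : u < 0 -> F (b1 * exp u) b2 = exp (r + c1 * u).
Proof.
  intros Hu. rewrite <- (Rmult_1_r b2) at 1. rewrite <- exp_0.
  apply (exp_affine_limit (fun v => F (b1 * exp u) (b2 * exp v)) _ (c2 + th * u)).
  - apply cdf_continuous_bexp_r.
  - intros v Hv. rewrite F_log_bilinear by assumption. f_equal. ring.
Qed.

Lemma marginal_r_exp (v : R) : v < 0 -> F b1 (b2 * exp v) = exp (r + c2 * v).
Proof.
  intros Hv. rewrite <- (Rmult_1_r b1) at 1. rewrite <- exp_0.
  apply (exp_affine_limit (fun u => F (b1 * exp u) (b2 * exp v)) _ (c1 + th * v)).
  - apply cdf_continuous_bexp_l.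
  - intros u Hu. rewrite F_log_bilinear by assumption. f_equal. ring.
Qed.

Lemma log_bilinear_const_0 : r = 0.
Proof.
  assert (Htop : F b1 b2 = exp r).
  { rewrite <- (Rmult_1_r b1), <- exp_0.
    apply (exp_affine_limit (fun u => F (b1 * exp u) b2) _ c1); [|exact marginal_l_exp].
    apply (continuous_comp (fun u => b1 * exp u) (fun x => F x b2)).
    - apply (@ex_derive_continuous R_AbsRing R_NormedModule). auto_derive. exact I.
    - apply cdf_continuous_l. lra. }
  apply exp_inv. rewrite exp_0, <- Htop. apply F_cdf.
Qed.

Lemma log_bilinear_c1_pos : 0 < c1.
Proof.
  apply (exponent_pos_of_vanishing (fun x => F x b2) b1); [exact b1_pos | apply cdf_continuous_l; lra | |].
  - apply cdf_zero. lra.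
  - intros u Hu. rewrite marginal_l_exp, log_bilinear_const_0 by exact Hu. f_equal. ring.
Qed.

Lemma log_bilinear_c2_pos : 0 < c2.
Proof.
  apply (exponent_pos_of_vanishing (fun y => F b1 y) b2); [exact b2_pos | apply cdf_continuous_r; lra | |].
  - apply cdf_zero. lra.
  - intros v Hv. rewrite marginal_r_exp, log_bilinear_const_0 by exact Hv. f_equal. ring.
Qed.

End LogBilinear.

Section FromCDCPE.

Hypothesis F_pos : forall t1 t2, 0 < t1 < b1 -> 0 < t2 < b2 -> 0 < F t1 t2.
Variables cf1 cf2 : R -> R.
Hypothesis F_cdcpe : cdcpe_prop F b1 b2 cf1 cf2.

Let a1 v := cf1 (b2 * exp v) / (1 - cf1 (b2 * exp v)).
Let a2 u := cf2 (b1 * exp u) / (1 - cf2 (b1 * exp u)).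

Lemma slice_l_log_affine (v : R) : v < 0 ->
  exists al, forall u, u < 0 -> ln (F (b1 * exp u) (b2 * exp v)) = al + a1 v * u.
Proof.
  intros Hv. pose proof (bexp_range b2 v b2_pos Hv) as Ht2.
  destruct F_cdcpe as (Hcf1 & _ & Hprop).
  destruct (ln_G_affine_ln (fun x => F x (b2 * exp v)) b1) with (c := cf1 (b2 * exp v))
    as [al Hal].
  - intros x. apply cdf_continuous_l. lra.
  - apply Hcf1, Ht2.
  - exact b1_pos.
  - intros t Ht. apply F_pos; assumption.
  - intros t Ht. exact (proj1 (Hprop t _ Ht Ht2)).
  - exists (al + a1 v * ln b1). intros u Hu.
    rewrite Hal, ln_bexp by (apply bexp_range || idtac; assumption). unfold a1. ring.
Qed.

Lemma slice_r_log_affine (u : R) : u < 0 ->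
  exists be, forall v, v < 0 -> ln (F (b1 * exp u) (b2 * exp v)) = be + a2 u * v.
Proof.
  intros Hu. pose proof (bexp_range b1 u b1_pos Hu) as Ht1.
  destruct F_cdcpe as (_ & Hcf2 & Hprop).
  destruct (ln_G_affine_ln (fun y => F (b1 * exp u) y) b2) with (c := cf2 (b1 * exp u))
    as [be Hbe].
  - intros y. apply cdf_continuous_r. lra.
  - apply Hcf2, Ht1.
  - exact b2_pos.
  - intros t Ht. apply F_pos; assumption.
  - intros t Ht. exact (proj2 (Hprop _ t Ht1 Ht)).
  - exists (be + a2 u * ln b2). intros v Hv.
    rewrite Hbe, ln_bexp by (apply bexp_range || idtac; assumption). unfold a2. ring.
Qed.

Lemma cdcpe_log_bilinear : exists r c1 c2 th,
  (forall u v, u < 0 -> v < 0 ->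
     F (b1 * exp u) (b2 * exp v) = exp (r + c1 * u + c2 * v + th * u * v)) /\
  (forall v, v < 0 -> 0 < c1 + th * v).
Proof.
  destruct (separately_affine_bilinear (fun u v => ln (F (b1 * exp u) (b2 * exp v))) a1 a2
              slice_l_log_affine slice_r_log_affine) as (r & c1 & c2 & th & Hbil).
  exists r, c1, c2, th. split.
  - intros u v Hu Hv. rewrite <- (proj1 (Hbil u v Hu Hv)).
    symmetry. apply exp_ln, F_pos; apply bexp_range; assumption.
  - intros v Hv. rewrite <- (proj1 (proj2 (Hbil (-1) v ltac:(lra) Hv))).
    destruct F_cdcpe as (Hcf1 & _). specialize (Hcf1 _ (bexp_range b2 v b2_pos Hv)).
    unfold a1. apply Rdiv_lt_0_compat; lra.
Qed.

Lemma cdcpe_biv_power : exists th c1 c2, biv_power F b1 b2 th c1 c2.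
Proof.
  destruct cdcpe_log_bilinear as (r & c1 & c2 & th & Hbil & Hslope).
  pose proof (log_bilinear_const_0 r c1 c2 th Hbil) as ->.
  exists th, c1, c2. split; [|split; [|split]].
  - exact (slope_nonpos c1 th Hslope).
  - exact (log_bilinear_c1_pos 0 c1 c2 th Hbil).
  - exact (log_bilinear_c2_pos 0 c1 c2 th Hbil).
  - intros t1 t2 Ht1 Ht2. rewrite power_form_exp.
    destruct (bexp_ln_ratio b1 t1 Ht1) as [Hx1 Hu]. destruct (bexp_ln_ratio b2 t2 Ht2) as [Hx2 Hv].
    rewrite <- Hx1 at 1. rewrite <- Hx2 at 1. rewrite Hbil by assumption. f_equal. ring.
Qed.

End FromCDCPE.

Section FromPower.

Variables th c1 c2 : R.
Hypothesis F_power : biv_power F b1 b2 th c1 c2.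

Lemma power_exponent_pos (c l : R) : 0 < c -> l < 0 -> 0 < c + th * l.
Proof. intros Hc Hl. destruct F_power as [Hth _]. nra. Qed.

Lemma power_cdcpe1 (t1 t2 : R) : 0 < t1 < b1 -> 0 < t2 < b2 ->
  0 < mit1 F t1 t2 /\
  cdcpe1 F t1 t2 = cpe_factor (c1 + th * ln (t2 / b2)) * mit1 F t1 t2.
Proof.
  intros Ht1 Ht2. destruct F_power as (_ & Hc1 & _ & HF).
  set (l2 := ln (t2 / b2)).
  apply (power_dcpe (fun x => F x t2) b1) with (alpha := c2 * l2 - (c1 + th * l2) * ln b1).
  - intros x. apply cdf_continuous_l. lra.
  - apply cdf_zero. lra.
  - apply power_exponent_pos; [exact Hc1 | apply bexp_ln_ratio, Ht2].
  - intros x Hx. rewrite HF, power_form_exp, (ln_div x b1) by lra. fold l2. f_equal. ring.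
  - exact Ht1.
Qed.

Lemma power_cdcpe2 (t1 t2 : R) : 0 < t1 < b1 -> 0 < t2 < b2 ->
  0 < mit2 F t1 t2 /\
  cdcpe2 F t1 t2 = cpe_factor (c2 + th * ln (t1 / b1)) * mit2 F t1 t2.
Proof.
  intros Ht1 Ht2. destruct F_power as (_ & _ & Hc2 & HF).
  set (l1 := ln (t1 / b1)).
  apply (power_dcpe (fun y => F t1 y) b2) with (alpha := c1 * l1 - (c2 + th * l1) * ln b2).
  - intros y. apply cdf_continuous_r. lra.
  - apply cdf_zero. lra.
  - apply power_exponent_pos; [exact Hc2 | apply bexp_ln_ratio, Ht1].
  - intros y Hy. rewrite HF, power_form_exp, (ln_div y b2) by lra. fold l1. f_equal. ring.
  - exact Ht2.
Qed.

Lemma power_cdcpe_prop : cdcpe_prop F b1 b2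
  (fun t => cpe_factor (c1 + th * ln (t / b2))) (fun t => cpe_factor (c2 + th * ln (t / b1))).
Proof.
  destruct F_power as (_ & Hc1 & Hc2 & _).
  split; [|split].
  - intros t Ht. apply cpe_factor_range, power_exponent_pos; [exact Hc1 | apply bexp_ln_ratio, Ht].
  - intros t Ht. apply cpe_factor_range, power_exponent_pos; [exact Hc2 | apply bexp_ln_ratio, Ht].
  - intros t1 t2 Ht1 Ht2. split; [apply power_cdcpe1 | apply power_cdcpe2]; assumption.
Qed.

Lemma cpe_factor_ln_continuous (c b : R) : 0 < b -> 0 < c ->
  continuous (fun t => cpe_factor (c + th * ln (t / b))) b.
Proof.
  intros Hb Hc. apply (@ex_derive_continuous R_AbsRing R_NormedModule). unfold cpe_factor.
  auto_derive. replace (b * / b) with 1 by (field; lra). rewrite ln_1. repeat split; lra.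
Qed.

Lemma cpe_factor_ln_at (c b : R) : 0 < b -> cpe_factor (c + th * ln (b / b)) = cpe_factor c.
Proof. intros Hb. replace (b / b) with 1 by (field; lra). rewrite ln_1. f_equal. ring. Qed.

(* The factors are determined by the proportionality, since the inactivity times are positive. *)
Lemma cdcpe_factor1_limit (cf1 cf2 : R -> R) : cdcpe_prop F b1 b2 cf1 cf2 ->
  limit1_in cf1 (fun t => 0 < t < b2) (cpe_factor c1) b2.
Proof.
  intros (_ & _ & Hprop). destruct F_power as (_ & Hc1 & _).
  rewrite <- (cpe_factor_ln_at c1 b2 b2_pos).
  apply (limit1_in_of_continuous _ (fun t => cpe_factor (c1 + th * ln (t / b2))));
    [apply cpe_factor_ln_continuous; assumption |].
  intros t Ht. destruct (power_cdcpe1 (b1 / 2) t ltac:(lra) Ht) as [Hmit Heq].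
  apply (Rmult_eq_reg_r (mit1 F (b1 / 2) t)); [| lra].
  rewrite <- Heq. symmetry. apply (Hprop (b1 / 2) t ltac:(lra) Ht).
Qed.

Lemma cdcpe_factor2_limit (cf1 cf2 : R -> R) : cdcpe_prop F b1 b2 cf1 cf2 ->
  limit1_in cf2 (fun t => 0 < t < b1) (cpe_factor c2) b1.
Proof.
  intros (_ & _ & Hprop). destruct F_power as (_ & _ & Hc2 & _).
  rewrite <- (cpe_factor_ln_at c2 b1 b1_pos).
  apply (limit1_in_of_continuous _ (fun t => cpe_factor (c2 + th * ln (t / b1))));
    [apply cpe_factor_ln_continuous; assumption |].
  intros t Ht. destruct (power_cdcpe2 t (b2 / 2) Ht ltac:(lra)) as [Hmit Heq].
  apply (Rmult_eq_reg_r (mit2 F t (b2 / 2))); [| lra].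
  rewrite <- Heq. symmetry. apply (Hprop t (b2 / 2) Ht ltac:(lra)).
Qed.

End FromPower.
End Bivariate.

Theorem mainTheorem16 (b1 b2 : R) (F : R -> R -> R) :
  0 < b1 -> 0 < b2 ->
  biv_cdf_on F b1 b2 ->
  biv_abs_cont F ->
  (forall t1 t2, 0 < t1 < b1 -> 0 < t2 < b2 -> 0 < F t1 t2) ->
  ((exists cf1 cf2 : R -> R, cdcpe_prop F b1 b2 cf1 cf2) <->
   (exists theta c1 c2 : R, biv_power F b1 b2 theta c1 c2)) /\
  (forall (cf1 cf2 : R -> R) (theta c1 c2 : R),
     cdcpe_prop F b1 b2 cf1 cf2 -> biv_power F b1 b2 theta c1 c2 ->
     (exists L1, limit1_in cf1 (fun t => 0 < t < b2) L1 b2 /\ L1 <> 1 /\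
                 c1 = L1 / (1 - L1)) /\
     (exists L2, limit1_in cf2 (fun t => 0 < t < b1) L2 b1 /\ L2 <> 1 /\
                 c2 = L2 / (1 - L2))).
Proof.
  intros Hb1 Hb2 Hcdf Hac Hpos. split; [split|].
  - intros (cf1 & cf2 & Hprop). exact (cdcpe_biv_power F b1 b2 Hb1 Hb2 Hcdf Hac Hpos cf1 cf2 Hprop).
  - intros (th & c1 & c2 & Hpow). do 2 eexists.
    exact (power_cdcpe_prop F b1 b2 Hb1 Hb2 Hcdf Hac th c1 c2 Hpow).
  - intros cf1 cf2 th c1 c2 Hprop Hpow.
    pose proof Hpow as (_ & Hc1 & Hc2 & _). split.
    + exists (cpe_factor c1). split; [|apply cpe_factor_inv, Hc1].
      exact (cdcpe_factor1_limit F b1 b2 Hb1 Hb2 Hcdf Hac th c1 c2 Hpow cf1 cf2 Hprop).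
    + exists (cpe_factor c2). split; [|apply cpe_factor_inv, Hc2].
      exact (cdcpe_factor2_limit F b1 b2 Hb1 Hb2 Hcdf Hac th c1 c2 Hpow cf1 cf2 Hprop).
Qed.
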